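(* Let $n\ge 2$. In the $(n,2,2)$ scenario with detection post-selection, the set $\tilde{\mathcal{L}}$ of post-selected correlators achievable by LHV models is strictly larger than the convex hull of the deterministic correlators $\tilde p(1|\mathbf{s})=\delta^1_{g(\mathbf{s})}$, $g$ ranging over linear Boolean functions on $\mathbf{s}$; that is, some LHV model with detection yields a post-selected correlator outside this convex hull.
   Context: $(n,2,2)$ scenario with imperfect detection: party $j$ receives input $s_j\in\{0,1\}$ and outputs two bits, a detection bit $t_j\in\{0,1\}$ ($1$ = detected) and an outcome $m_j\in\{0,1\}$. An LHV model is $p(\mathbf{t},\mathbf{m}|\mathbf{s})=\int p(\lambda)d\lambda\prod_{j}p(t_j,m_j|s_j,\lambda)$. Detection post-selection keeps only runs with $\mathbf{t}=(1,\dots,1)$; the post-selected correlator is $\tilde p(1|\mathbf{s})=p(\bigoplus_j m_j=1\mid\mathbf{s},\mathbf{t}=(1,\dots,1))$ (defined when the conditioning event has positive probability). A linear Boolean function on $\mathbf{s}$ is $g(\mathbf{s})=\big(\bigoplus_j a_j s_j\big)\oplus b$ with $a_j,b\in\{0,1\}$; $\oplus$ is addition mod 2. *)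

From HB Require Import structures.
From mathcomp Require Import all_boot all_order all_algebra.
Set Implicit Arguments. Unset Strict Implicit. Unset Printing Implicit Defensive.
Import Order.TTheory GRing.Theory Num.Theory.
Local Open Scope ring_scope.

Definition bits (n : nat) := {ffun 'I_n -> bool}.

Definition xorall (n : nat) (x : bits n) : bool := \big[addb/false]_(j < n) x j.

Section LHV.
Variables (R : realFieldType) (n : nat).

(* An LHV model with hidden-variable space Lam (finite), weights mu, and
   local response functions Pr j l s_j t_j m_j = p(t_j, m_j | s_j, lambda). *)
Definition is_LHV (Lam : finType) (mu : Lam -> R)
  (Pr : 'I_n -> Lam -> bool -> bool -> bool -> R) : Prop :=
  [/\ (forall l, 0 <= mu l), \sum_(l : Lam) mu l = 1,
      (forall j l s t m, 0 <= Pr j l s t m) &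
      (forall j l s, \sum_(t : bool) \sum_(m : bool) Pr j l s t m = 1)].

Definition joint (Lam : finType) (mu : Lam -> R)
  (Pr : 'I_n -> Lam -> bool -> bool -> bool -> R) (s t m : bits n) : R :=
  \sum_(l : Lam) mu l * \prod_(j < n) Pr j l (s j) (t j) (m j).

Definition all_detected : bits n := [ffun=> true].

Definition det_prob (Lam : finType) mu Pr (s : bits n) : R :=
  \sum_(m : bits n) @joint Lam mu Pr s all_detected m.

Definition succ_prob (Lam : finType) mu Pr (s : bits n) : R :=
  \sum_(m : bits n | xorall m) @joint Lam mu Pr s all_detected m.

Definition postsel (Lam : finType) mu Pr (s : bits n) : R :=
  @succ_prob Lam mu Pr s / @det_prob Lam mu Pr s.

Definition LHV_postsel_correlator (c : bits n -> R) : Prop :=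
  exists (Lam : finType) (mu : Lam -> R) (Pr : 'I_n -> Lam -> bool -> bool -> bool -> R),
    [/\ is_LHV mu Pr, (forall s, 0 < det_prob mu Pr s) &
        (forall s, c s = postsel mu Pr s)].

Definition lin_bool (a : bits n) (b : bool) (s : bits n) : bool :=
  (\big[addb/false]_(j < n) (a j && s j)) (+) b.

Definition det_corr (a : bits n) (b : bool) (s : bits n) : R :=
  if lin_bool a b s then 1 else 0.

Definition in_lin_hull (c : bits n -> R) : Prop :=
  exists w : bits n * bool -> R,
    [/\ (forall k, 0 <= w k), \sum_(k : bits n * bool) w k = 1 &
        (forall s, c s = \sum_(k : bits n * bool) w k * det_corr k.1 k.2 s)].

End LHV.

From HB Require Import structures.
From mathcomp Require Import all_boot all_order all_algebra.
From mathcomp Require Import lra.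
Set Implicit Arguments. Unset Strict Implicit. Unset Printing Implicit Defensive.
Import Order.TTheory GRing.Theory Num.Theory.
Local Open Scope ring_scope.

(* Each vertex of the hull is realised by a deterministic model in which every
   party always detects and party 0 adds the offset b to its parity, so the
   hull lies in L~.  Conversely, post-selection lets the hidden variable choose
   which inputs are detected: with lambda uniform on two bits, party 0 detects
   iff s_0 = lambda_1, party 1 iff s_1 = lambda_2, and party 0 outputs
   lambda_1 lambda_2.  Only lambda = (s_0, s_1) survives, so the post-selected
   correlator is s_0 s_1.  On the inputs (x, y, 0, ..., 0), every linear g, and
   hence every convex combination of the delta^1_g, satisfies
   p(1,1) - p(0,0) - p(0,1) - p(1,0) <= 0, whereas s_0 s_1 gives 1. *)

Lemma prodr_nat_bool (R : comPzSemiRingType) (I : finType) (P : pred I) :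
  \prod_(i : I) ((P i)%:R : R) = ([forall i, P i])%:R.
Proof.
have [/forallP HP|/forallPn [i Pi]] := boolP [forall i, P i].
  by rewrite big1 // => i _; rewrite HP.
by rewrite (bigD1 i) //= (negbTE Pi) mul0r.
Qed.

Lemma sumr_indicator (R : pzSemiRingType) (I : finType) (P : pred I)
    (F : I -> R) (i0 : I) :
  \sum_(i | P i) F i * (i == i0)%:R = if P i0 then F i0 else 0.
Proof.
rewrite big_mkcond (bigD1 i0) //= big1 ?addr0.
  by rewrite eqxx mulr1; case: (P i0).
by move=> i /negbTE ->; rewrite mulr0; case: (P i).
Qed.

Section DeterministicModel.
Variables (R : realFieldType) (n : nat) (Lam : finType) (mu : Lam -> R)
  (D : 'I_n -> Lam -> bool -> bool * bool).

Definition determ_resp (j : 'I_n) (l : Lam) (s t m : bool) : R :=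
  ((t, m) == D j l s)%:R.

Definition detected (l : Lam) (s : bits n) : bool := [forall j, (D j l (s j)).1].

Definition outcome (l : Lam) (s : bits n) : bits n := [ffun j => (D j l (s j)).2].

Lemma is_LHV_determ : (forall l, 0 <= mu l) -> \sum_l mu l = 1 -> is_LHV mu determ_resp.
Proof.
move=> mu_ge0 mu_sum1; split=> // j l s.
by rewrite /determ_resp !big_bool; case: (D j l s) => [[] []]; rewrite /= ?addr0 ?add0r.
Qed.

Lemma joint_determ s m :
  joint mu determ_resp s (all_detected n) m =
  \sum_l mu l * (detected l s)%:R * (m == outcome l s)%:R.
Proof.
apply: eq_bigr => l _; rewrite -mulrA -natrM mulnb; congr (_ * _).
transitivity (\prod_j ((D j l (s j)).1 && (m j == (D j l (s j)).2))%:R : R).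
  by apply: eq_bigr => j _; rewrite /determ_resp ffunE; case: (D j l (s j)).
have -> : (m == outcome l s) = [forall j, m j == (D j l (s j)).2].
  apply/eqP/forallP => [-> j|Hm]; first by rewrite ffunE.
  by apply/ffunP => j; rewrite ffunE; exact/eqP.
rewrite prodr_nat_bool; congr (nat_of_bool _)%:R.
apply/idP/andP => [/forallP Hl|[/forallP Hd /forallP Ho]].
  by split; apply/forallP => j; case/andP: (Hl j).
by apply/forallP => j; rewrite Hd Ho.
Qed.

Lemma det_prob_determ s : det_prob mu determ_resp s = \sum_l mu l * (detected l s)%:R.
Proof.
rewrite /det_prob (eq_bigr _ (fun m _ => joint_determ s m)) exchange_big /=.
by apply: eq_bigr => l _; rewrite (sumr_indicator xpredT).
Qed.

Lemma succ_prob_determ s : succ_prob mu determ_resp s =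
  \sum_l mu l * (detected l s)%:R * (xorall (outcome l s))%:R.
Proof.
rewrite /succ_prob (eq_bigr _ (fun m _ => joint_determ s m)) exchange_big /=.
by apply: eq_bigr => l _; rewrite sumr_indicator; case: xorall; rewrite ?mulr1 ?mulr0.
Qed.

End DeterministicModel.

Definition vertex_resp (n : nat) (j : 'I_n.+1) (k : bits n.+1 * bool) (x : bool) :
  bool * bool := (true, (k.1 j && x) (+) (k.2 && (j == ord0))).

Lemma detected_vertex n k s : detected (@vertex_resp n) k s.
Proof. exact/forallP. Qed.

Lemma xorall_outcome_vertex n k s :
  xorall (outcome (@vertex_resp n) k s) = lin_bool k.1 k.2 s.
Proof.
rewrite /xorall /lin_bool (eq_bigr _ (fun j _ => ffunE _ j)) big_split /=.
congr addb; rewrite big_ord_recl eqxx andbT big1 ?addbF // => j _.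
by rewrite eq_sym (negbTE (neq_lift _ _)) andbF.
Qed.

Lemma lin_hull_LHV_postsel (R : realFieldType) n (c : bits n.+1 -> R) :
  in_lin_hull c -> LHV_postsel_correlator c.
Proof.
case=> w [w_ge0 w_sum1 c_hull].
have det1 s : det_prob w (determ_resp R (@vertex_resp n)) s = 1.
  by rewrite det_prob_determ -[RHS]w_sum1; apply: eq_bigr => k _; rewrite detected_vertex mulr1.
exists _, w, (determ_resp R (@vertex_resp n)); split=> [|s|s].
- exact: is_LHV_determ.
- by rewrite det1 ltr01.
rewrite c_hull /postsel det1 divr1 succ_prob_determ; apply: eq_bigr => k _.
by rewrite detected_vertex mulr1 xorall_outcome_vertex /det_corr; case: lin_bool.
Qed.

Lemma lin_hull_ineq (R : realFieldType) n (ps : seq (bits n * R)) (c : bits n -> R) :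
  (forall a b, \sum_(p <- ps) p.2 * det_corr R a b p.1 <= 0) ->
  in_lin_hull c -> \sum_(p <- ps) p.2 * c p.1 <= 0.
Proof.
move=> vertex_le0 [w [w_ge0 _ c_hull]].
under eq_bigr do rewrite c_hull mulr_sumr.
rewrite exchange_big sumr_le0 // => k _.
under eq_bigr do rewrite mulrCA.
by rewrite -mulr_sumr mulr_ge0_le0.
Qed.

Section AndCorrelator.
Variables (R : realFieldType) (n : nat).
Let i0 : 'I_n.+2 := ord0.
Let i1 : 'I_n.+2 := lift ord0 ord0.

Definition and_corr (s : bits n.+2) : R := (s i0 && s i1)%:R.

Definition and_resp (j : 'I_n.+2) (l : bool * bool) (x : bool) : bool * bool :=
  if val j == 0%N then (x == l.1, l.1 && l.2)
  else if val j == 1%N then (x == l.2, false) else (true, false).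

Lemma detected_and l s : detected and_resp l s = (l == (s i0, s i1)).
Proof.
case: l => a b; rewrite xpair_eqE.
apply/forallP/andP => [det|[/eqP -> /eqP ->] j].
  by split; rewrite eq_sym; [exact: det i0 | exact: det i1].
case: j => [[|[|k]] jlt] //=.
  by rewrite (_ : Ordinal jlt = i0) //; apply: val_inj.
by rewrite (_ : Ordinal jlt = i1) //; apply: val_inj.
Qed.

Lemma xorall_outcome_and l s : xorall (outcome and_resp l s) = l.1 && l.2.
Proof.
rewrite /xorall !big_ord_recl big1 ?addbF; first by rewrite !ffunE /= addbF.
by move=> j _; rewrite ffunE.
Qed.

Lemma and_corr_LHV_postsel : LHV_postsel_correlator and_corr.
Proof.
pose mu (l : bool * bool) : R := 4^-1.
have four_neq0 : (4 : R) != 0 by rewrite pnatr_eq0.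
have det_and s : det_prob mu (determ_resp R and_resp) s = 4^-1.
  rewrite det_prob_determ; under eq_bigr do rewrite detected_and.
  by rewrite (sumr_indicator xpredT).
exists _, mu, (determ_resp R and_resp); split=> [|s|s].
- apply: is_LHV_determ => [l|]; first by rewrite invr_ge0 ler0n.
  by rewrite sumr_const card_prod card_bool -(mulr_natr (4^-1 : R)) mulVf.
- by rewrite det_and invr_gt0 ltr0n.
rewrite /postsel det_and succ_prob_determ.
under eq_bigr do rewrite detected_and mulrAC.
rewrite (sumr_indicator xpredT) xorall_outcome_and /=.
by rewrite mulrAC divff ?mul1r // invr_eq0.
Qed.

Definition input2 (x y : bool) : bits n.+2 :=
  [ffun j => if val j == 0%N then x else if val j == 1%N then y else false].

Lemma lin_bool_input2 a b x y :
  lin_bool a b (input2 x y) = (a i0 && x) (+) (a i1 && y) (+) b.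
Proof.
rewrite /lin_bool !big_ord_recl big1 ?addbF; first by rewrite !ffunE.
by move=> j _; rewrite ffunE andbF.
Qed.

Definition and_witness : seq (bits n.+2 * R) :=
  [:: (input2 true true, 1); (input2 false false, -1);
      (input2 false true, -1); (input2 true false, -1)].

Lemma det_corr_and_witness a b :
  \sum_(p <- and_witness) p.2 * det_corr R a b p.1 <= 0.
Proof.
rewrite !big_cons big_nil /det_corr !lin_bool_input2.
by case: (a i0); case: (a i1); case: b => /=; lra.
Qed.

Lemma and_corr_witness : \sum_(p <- and_witness) p.2 * and_corr p.1 = 1.
Proof. by rewrite !big_cons big_nil /and_corr !ffunE /=; lra. Qed.

Lemma and_corr_notin_lin_hull : ~ in_lin_hull and_corr.
Proof.
move=> /(lin_hull_ineq det_corr_and_witness).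
by rewrite and_corr_witness ler10.
Qed.

End AndCorrelator.

Theorem proposition4p1p1 (R : realFieldType) (n : nat) (hn : (2 <= n)%N) :
  (forall c : bits n -> R, in_lin_hull c -> LHV_postsel_correlator c) /\
  (exists c : bits n -> R, LHV_postsel_correlator c /\ ~ in_lin_hull c).
Proof.
case: n hn => [|[|n]] // _; split; first exact: lin_hull_LHV_postsel.
exists (@and_corr R n); split; [exact: and_corr_LHV_postsel | exact: and_corr_notin_lin_hull].
Qed.
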